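(* Let $A$ be a finitely generated algebra over $B=\bigoplus_{s=1}^K\Bbbk e_s$, let $\alpha\in\mathbb N^K$, $N=\sum_s\alpha_s$, $R=\mathcal O(\operatorname{Rep}(A,\alpha))$, and let $Q\in(D_BA)_n$ with associated differential $n$-bracket $\{\!\{-,\ldots,-\}\!\}=\{\!\{-,\ldots,-\}\!\}_Q$. For $x=x^1\otimes\cdots\otimes x^n\in A^{\otimes n}$ set $x_{(u_1v_1,\ldots,u_nv_n)}=x^1_{u_1v_1}\cdots x^n_{u_nv_n}\in R$ (extended linearly). Let $S_{n-1}$ act on $\{2,\ldots,n\}$, extended by $\tilde\sigma(1)=1$. Then for all $a^1,\ldots,a^n\in A$ and indices $u_q,v_q\in\{1,\ldots,N\}$, $$\operatorname{tr}\mathcal X(Q)\big(a^1_{u_1v_1},\ldots,a^n_{u_nv_n}\big)=\sum_{\tilde\sigma\in S_{n-1}}\epsilon(\tilde\sigma)\,\{\!\{a^1,a^{\tilde\sigma(2)},\ldots,a^{\tilde\sigma(n)}\}\!\}_{\tilde\sigma(u,v)},$$ where $\tilde\sigma(u,v)=(u_{\tilde\sigma(n)}v_1,\,u_1v_{\tilde\sigma(2)},\,u_{\tilde\sigma(2)}v_{\tilde\sigma(3)},\ldots,u_{\tilde\sigma(n-1)}v_{\tilde\sigma(n)})$ and $\epsilon(\tilde\sigma)$ is the sign of $\tilde\sigma$.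
   Context: $\Bbbk$ field of characteristic $0$, $\otimes=\otimes_\Bbbk$, $e_se_t=\delta_{st}e_s$, $\sum e_s=1$. Representation space: $R$ is the commutative $\Bbbk$-algebra generated by symbols $a_{ij}$ ($a\in A$, $1\le i,j\le N$) with $(a+b)_{ij}=a_{ij}+b_{ij}$, $(ab)_{ij}=\sum_ka_{ik}b_{kj}$, and $(e_s)_{ij}=\delta_{ij}$ if $\alpha_1+\cdots+\alpha_{s-1}<i,j\le\alpha_1+\cdots+\alpha_s$, $0$ otherwise. $D_{A/B}=\operatorname{Der}_B(A,A\otimes A)$ for the outer structure $x(d'\otimes d'')y=xd'\otimes d''y$, with bimodule structure $(b\delta c)(a)=\delta(a)'c\otimes b\delta(a)''$; $D_BA=T_AD_{A/B}$. For $\delta\in D_{A/B}$, $\delta_{ij}\in\operatorname{Der}(R)$ is defined by $\delta_{ij}(b_{kl})=\delta(b)'_{kj}\delta(b)''_{il}$, and $\mathcal X(\delta)$ is the matrix $(\delta_{ij})$; for $Q=\delta_1\cdots\delta_n$, $\mathcal X(Q)=\mathcal X(\delta_1)\cdots\mathcal X(\delta_n)$ (matrix product with entries multiplied by $\wedge$ in $\bigwedge^n_R\operatorname{Der}(R)$), $\operatorname{tr}\mathcal X(Q)=\sum_i(\mathcal X(Q))_{ii}$, extended linearly. Polyvector fields are evaluated by $(\xi_1\wedge\cdots\wedge\xi_n)(f_1,\ldots,f_n)=\sum_{\sigma\in S_n}\epsilon(\sigma)\xi_1(f_{\sigma(1)})\cdots\xi_n(f_{\sigma(n)})$. With $\tau_\sigma(a_1\otimes\cdots\otimes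 a_n)=a_{\sigma^{-1}(1)}\otimes\cdots\otimes a_{\sigma^{-1}(n)}$, for $Q=\delta_1\cdots\delta_n$ the $n$-bracket is $\{\!\{-,\ldots,-\}\!\}_Q=\sum_{i=0}^{n-1}(-1)^{(n-1)i}\tau^i_{(1\ldots n)}\circ\widetilde{\{\!\{\}\!\}}_Q\circ\tau^{-i}_{(1\ldots n)}$ with $\widetilde{\{\!\{a_1,\ldots,a_n\}\!\}}_Q=\delta_n(a_n)'\delta_1(a_1)''\otimes\delta_1(a_1)'\delta_2(a_2)''\otimes\cdots\otimes\delta_{n-1}(a_{n-1})'\delta_n(a_n)''$, extended linearly in $Q$. *)

From HB Require Import structures.
From mathcomp Require Import all_boot all_order all_algebra all_fingroup.
From Stdlib Require List.
Set Implicit Arguments. Unset Strict Implicit. Unset Printing Implicit Defensive.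
Import GRing.Theory.
Local Open Scope ring_scope.

Definition is_B_alg (k : fieldType) (A : algType k) (K : nat) (e : 'I_K -> A) : Prop :=
  (forall s t, e s * e t = if s == t then e s else 0) /\ \sum_(s < K) e s = 1.

Definition fin_gen (k : fieldType) (A : algType k) (K : nat) (e : 'I_K -> A) : Prop :=
  exists gens : seq A, forall P : A -> Prop,
    P 1 -> (forall s, P (e s)) -> (forall x, List.In x gens -> P x) ->
    (forall (c : k) x y, P x -> P y -> P (c *: x + y)) ->
    (forall x y, P x -> P y -> P (x * y)) -> forall a, P a.

(* ---------- Tensor product A (x)_k A ----------
   An element of A (x) A is represented by a finite list of simple tensors
   [(x_1,y_1);...] meaning sum_m x_m (x) y_m; two lists are equal in A (x) A
   iff every k-bilinear map out of A x A takes the same value on them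
   (universal property of the tensor product). *)
Definition tens2_eq (k : fieldType) (A : lmodType k) (s t : seq (A * A)) : Prop :=
  forall (V : lmodType k) (f : A -> A -> V),
    (forall (c : k) x x' y, f (c *: x + x') y = c *: f x y + f x' y) ->
    (forall (c : k) x y y', f x (c *: y + y') = c *: f x y + f x y') ->
    \sum_(p <- s) f p.1 p.2 = \sum_(p <- t) f p.1 p.2.

(* Double derivations: delta in D_{A/B} = Der_B(A, A (x) A) (outer structure),
   given by a representative  d : A -> seq (A * A)  of delta(a) = delta(a)' (x) delta(a)''. *)
Definition is_dder (k : fieldType) (A : algType k) (K : nat) (e : 'I_K -> A)
    (d : A -> seq (A * A)) : Prop :=
  [/\ forall (c : k) a b,
        tens2_eq (d (c *: a + b)) ([seq (c *: p.1, p.2) | p <- d a] ++ d b),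
      forall a b,
        tens2_eq (d (a * b))
          ([seq (p.1, p.2 * b) | p <- d a] ++ [seq (a * p.1, p.2) | p <- d b]) &
      forall s, tens2_eq (d (e s)) [::]].

(* the block idempotent (e_s)_{ij} (0-based indices) *)
Definition blockE (k : fieldType) (C : comAlgType k) (K : nat) (al : 'I_K -> nat)
    (N : nat) (s : 'I_K) : 'M[C]_N :=
  let off := (\sum_(t < K | (t < s)%N) al t)%N in
  \matrix_(i, j) (((i == j) && (off <= i)%N && (i < off + al s)%N)%:R : C).

(* rho : A -> M_N(C) is a B-algebra map, i.e. a point of Rep(A, alpha) over C *)
Definition is_rep (k : fieldType) (A : algType k) (K : nat) (e : 'I_K -> A)
    (al : 'I_K -> nat) (N : nat) (C : comAlgType k) (rho : A -> 'M[C]_N) : Prop :=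
  [/\ forall (c : k) a b, rho (c *: a + b) = (c%:A : C) *: rho a + rho b,
      forall a b, rho (a * b) = rho a *m rho b,
      rho 1 = 1%:M &
      forall s, rho (e s) = blockE C al N s].

Definition is_alg_morph (k : fieldType) (R C : comAlgType k) (phi : R -> C) : Prop :=
  [/\ forall (c : k) x y, phi (c *: x + y) = c *: phi x + phi y,
      forall x y, phi (x * y) = phi x * phi y & phi 1 = 1].

(* (R, rho) is O(Rep(A,alpha)) : the commutative k-algebra generated by the
   symbols a_{ij} = rho a i j subject to the stated relations, i.e. the
   universal commutative k-algebra carrying such a representation. *)
Definition is_coord_ring (k : fieldType) (A : algType k) (K : nat) (e : 'I_K -> A)
    (al : 'I_K -> nat) (N : nat) (R : comAlgType k) (rho : A -> 'M[R]_N) : Prop :=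
  is_rep e al rho /\
  forall (C : comAlgType k) (rho' : A -> 'M[C]_N), is_rep e al rho' ->
    (exists phi : R -> C, is_alg_morph phi /\ forall a i j, phi (rho a i j) = rho' a i j) /\
    (forall phi1 phi2 : R -> C, is_alg_morph phi1 -> is_alg_morph phi2 ->
       (forall a i j, phi1 (rho a i j) = rho' a i j) ->
       (forall a i j, phi2 (rho a i j) = rho' a i j) -> phi1 =1 phi2).

(* (d, i, j) stands for the derivation delta_{ij} of R *)
Definition dgen (A : Type) (N : nat) := ((A -> seq (A * A)) * 'I_N * 'I_N)%type.
(* (b, k, l) stands for the generator b_{kl} of R *)
Definition rgen (A : Type) (N : nat) := (A * 'I_N * 'I_N)%type.

(* delta_{ij}(b_{kl}) = delta(b)'_{kj} delta(b)''_{il} *)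
Definition dgen_ev (k : fieldType) (A : algType k) (N : nat) (R : comAlgType k)
    (rho : A -> 'M[R]_N) (x : dgen A N) (f : rgen A N) : R :=
  \sum_(p <- x.1.1 f.1.1) rho p.1 f.1.2 x.2 * rho p.2 x.1.2 f.2.

(* an element of wedge^*_R Der(R): formal R-linear combination of wedge words *)
Definition pv (A : Type) (N : nat) (R : Type) := seq (R * seq (dgen A N)).

Definition pv_wedge (k : fieldType) (A : Type) (N : nat) (R : comAlgType k)
    (P1 P2 : pv A N R) : pv A N R :=
  [seq (p.1 * q.1, p.2 ++ q.2) | p <- P1, q <- P2].

Definition pv_scale (k : fieldType) (A : Type) (N : nat) (R : comAlgType k)
    (r : R) (P : pv A N R) : pv A N R := [seq (r * p.1, p.2) | p <- P].

(* matrices with entries in wedge^*, multiplied with wedge *)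
Definition pv_mx (A : Type) (N : nat) (R : Type) := 'I_N -> 'I_N -> pv A N R.

Definition pv_mxmul (k : fieldType) (A : Type) (N : nat) (R : comAlgType k)
    (M1 M2 : pv_mx A N R) : pv_mx A N R :=
  fun i l => flatten [seq pv_wedge (M1 i j) (M2 j l) | j <- enum 'I_N].

Definition pv_mx1 (k : fieldType) (A : Type) (N : nat) (R : comAlgType k) : pv_mx A N R :=
  fun i j => if i == j then [:: (1, [::])] else [::].

Definition Xmat (k : fieldType) (A : Type) (N : nat) (R : comAlgType k)
    (d : A -> seq (A * A)) : pv_mx A N R :=
  fun i j => [:: (1, [:: (d, i, j)])].

Definition Xword (k : fieldType) (A : Type) (N : nat) (R : comAlgType k)
    (w : seq (A -> seq (A * A))) : pv_mx A N R :=
  foldr (fun d M => pv_mxmul (@Xmat k A N R d) M) (@pv_mx1 k A N R) w.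

(* Q = sum_q c_q (delta^q_1 ... delta^q_n), X extended linearly *)
Definition XQ (k : fieldType) (A : Type) (N : nat) (R : comAlgType k)
    (Q : seq (k * seq (A -> seq (A * A)))) : pv_mx A N R :=
  fun i j => flatten [seq pv_scale (q.1%:A) (@Xword k A N R q.2 i j) | q <- Q].

Definition pv_tr (A : Type) (N : nat) (R : Type) (M : pv_mx A N R) : pv A N R :=
  flatten [seq M i i | i <- enum 'I_N].

Definition pv_eval (k : fieldType) (A : algType k) (N : nat) (R : comAlgType k)
    (rho : A -> 'M[R]_N) (m : nat) (P : pv A N R) (fs : 'I_m.+1 -> rgen A N) : R :=
  \sum_(p <- P) p.1 * \sum_(s : 'S_m.+1) (-1) ^+ odd_perm s *
     \prod_(pr <- zip p.2 [seq fs (s q) | q <- enum 'I_m.+1]) dgen_ev rho pr.1 pr.2.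

Fixpoint cartprod (X : Type) (ls : seq (seq X)) : seq (seq X) :=
  match ls with
  | [::] => [:: [::]]
  | l :: ls' => [seq x :: c | x <- l, c <- cartprod ls']
  end.

Definition prevo (m : nat) (q : 'I_m.+1) : 'I_m.+1 := inord ((q + m) %% m.+1).

(* tilde bracket of the word w = delta_1...delta_n applied to x_1 (x) ... (x) x_n:
   component q is delta_{q-1}(x_{q-1})' delta_q(x_q)'' (indices cyclic). *)
Definition tbr (k : fieldType) (A : algType k) (m : nat) (w : seq (A -> seq (A * A)))
    (x : 'I_m.+1 -> A) : seq ('I_m.+1 -> A) :=
  [seq (fun q : 'I_m.+1 => (nth (0, 0) c (prevo q)).1 * (nth (0, 0) c q).2)
  | c <- cartprod [seq (nth (fun _ => [::]) w q) (x q) | q : 'I_m.+1 <- enum 'I_m.+1]].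

Definition rotT (A : Type) (m i : nat) (y : 'I_m.+1 -> A) : 'I_m.+1 -> A :=
  fun j => y (inord ((j + m.+1 - i %% m.+1) %% m.+1)).
Definition rotTinv (A : Type) (m i : nat) (x : 'I_m.+1 -> A) : 'I_m.+1 -> A :=
  fun j => x (inord ((j + i) %% m.+1)).

(* elements of A^{(x) n}: k-linear combinations of simple tensors *)
Definition bracket_w (k : fieldType) (A : algType k) (m : nat)
    (w : seq (A -> seq (A * A))) (x : 'I_m.+1 -> A) : seq (k * ('I_m.+1 -> A)) :=
  flatten [seq [seq ((-1) ^+ (m * i), rotT i y) | y <- tbr w (rotTinv i x)]
          | i <- iota 0 m.+1].

Definition bracket (k : fieldType) (A : algType k) (m : nat)
    (Q : seq (k * seq (A -> seq (A * A)))) (x : 'I_m.+1 -> A) : seq (k * ('I_m.+1 -> A)) :=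
  flatten [seq [seq (q.1 * t.1, t.2) | t <- bracket_w q.2 x] | q <- Q].

Definition tens_eval (k : fieldType) (A : algType k) (N : nat) (R : comAlgType k)
    (rho : A -> 'M[R]_N) (m : nat) (t : seq (k * ('I_m.+1 -> A)))
    (uu vv : 'I_m.+1 -> 'I_N) : R :=
  \sum_(p <- t) p.1 *: \prod_(q : 'I_m.+1) rho (p.2 q) (uu q) (vv q).

From HB Require Import structures.
From mathcomp Require Import all_boot all_order all_algebra all_fingroup.
From Stdlib Require List.
Set Implicit Arguments. Unset Strict Implicit. Unset Printing Implicit Defensive.
Import GRing.Theory.
Local Open Scope ring_scope.

(** The value of tr X(Q) on (a^1_{u_1 v_1}, ..., a^n_{u_n v_n}) antisymmetrizes over
   S_n the trace of the product of the matrices (delta_q{ij}(a^q_{u_q v_q}))_{ij}.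
   Each of them is a sum of rank-one matrices c_q r_q, with c_q the column v_q of
   rho(delta_q(a^q)'') and r_q the row u_q of rho(delta_q(a^q)'), and the trace of
   c_1 r_1 ... c_n r_n is the cyclic product of the scalars r_{q-1} c_q, which by
   multiplicativity of rho are the entries of the tilde bracket at the indices
   (u_{q-1}, v_q).  Every permutation is a rotation by i, of sign (-1)^((n-1) i),
   followed by a permutation fixing the first index; summing over the rotations
   gives the cyclic symmetrization that defines the n-bracket. *)

Section Rotations.
Variable m : nat.
Local Notation I := 'I_m.+1.

Definition rot (i : I) : 'S_m.+1 := perm (addIr i).

Lemma rotE i r : rot i r = r + i.
Proof. by rewrite permE. Qed.

Definition rot1 : 'S_m.+1 := lift_perm ord_max ord0 1.

Lemma val_rot1 (r : I) : val (rot1 r) = ((r + 1) %% m.+1)%N.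
Proof.
case: (unliftP ord_max r) => [j|] ->; rewrite /rot1.
- rewrite lift_perm_lift perm1 /= /bump leq0n leqNgt ltn_ord add0n add1n addn1.
  by rewrite modn_small // ltnS.
- by rewrite (lift_perm_id ord_max) /= addn1 modnn.
Qed.

Lemma val_rot1X j (r : I) : val ((rot1 ^+ j)%g r) = ((r + j) %% m.+1)%N.
Proof.
elim: j => [|j IH]; first by rewrite expg0 perm1 addn0 modn_small.
by rewrite expgSr permM val_rot1 IH modnDml addn1 addnS.
Qed.

Lemma odd_rot (i : I) : odd_perm (rot i) = odd (m * i).
Proof.
have -> : rot i = (rot1 ^+ i)%g by apply/permP => r; apply/val_inj; rewrite val_rot1X rotE.
have odd_rot1 : odd_perm rot1 = odd m by rewrite odd_lift_perm /= odd_perm1 !addbF.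
elim: (nat_of_ord i) => [|j IH]; first by rewrite expg0 odd_perm1 muln0.
by rewrite expgSr odd_permM IH odd_rot1 mulnS oddD addbC.
Qed.

(* Every permutation is uniquely [rot i * s] with [s] fixing [0], namely for [i = - s^-1 0]. *)
Lemma sum_perm_rot (R : nzRingType) (F : 'S_m.+1 -> R) :
  \sum_(s : 'S_m.+1) (-1) ^+ odd_perm s * F s =
  \sum_(s : 'S_m.+1 | s ord0 == ord0) (-1) ^+ odd_perm s *
     \sum_(i : I) (-1) ^+ (m * i) * F (rot i * s)%g.
Proof.
rewrite (partition_big (fun s : 'S_m.+1 => - (s^-1)%g ord0) xpredT) //=.
under [RHS]eq_bigr do rewrite mulr_sumr.
rewrite [RHS]exchange_big /=; apply: eq_bigr => i _.
rewrite (reindex_inj (mulgI (rot i))) /=; apply: eq_big => s.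
- by rewrite eqr_oppLR (canF_eq (permKV _)) permM rotE addNr eq_sym.
- rewrite odd_permM odd_rot signr_addb !signr_odd => _.
  by rewrite mulrA -!exprD addnC.
Qed.
End Rotations.

Lemma eq_big_In (T : Type) (V : nmodType) (s : seq T) (F1 F2 : T -> V) :
  (forall x, List.In x s -> F1 x = F2 x) ->
  \sum_(x <- s) F1 x = \sum_(x <- s) F2 x.
Proof.
elim: s => [|x s IH] eqF; first by rewrite !big_nil.
by rewrite !big_cons eqF /= ?IH // => [y sy|]; [apply: eqF; right | left].
Qed.

Lemma zip_enum_ord (T1 T2 : Type) (x0 : T1) n (s : seq T1) (g : 'I_n -> T2) :
  size s = n ->
  zip s [seq g q | q <- enum 'I_n] = [seq (nth x0 s q, g q) | q : 'I_n <- enum 'I_n].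
Proof.
move=> size_s.
have {1}-> : s = [seq nth x0 s q | q : 'I_n <- enum 'I_n].
  by rewrite -[LHS](mkseq_nth x0) size_s /mkseq -val_enum_ord -map_comp.
by rewrite zip_map.
Qed.

Lemma scaler_signE (k : pzRingType) (V : lalgType k) n (x : V) :
  ((-1) ^+ n : k) *: x = (-1) ^+ n * x.
Proof. by rewrite -[in LHS]signr_odd scaler_sign -[in RHS]signr_odd mulr_sign. Qed.

Lemma val_prevo m (q : 'I_m.+1) : val (prevo q) = ((q + m) %% m.+1)%N.
Proof. by rewrite /= inordK // ltn_pmod. Qed.

Lemma prevoD m (r i : 'I_m.+1) : prevo (r + i) = prevo r + i.
Proof. by apply/val_inj; rewrite /= !val_prevo /= !modnDml addnAC. Qed.

Section MatrixProducts.
Variables (R : comNzRingType) (N : nat).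

Definition mx_prod (Ms : seq 'M[R]_N) : 'M[R]_N := foldr mulmx 1%:M Ms.

Lemma mx_prod_cons M Ms : mx_prod (M :: Ms) = M *m mx_prod Ms.
Proof. by []. Qed.

Lemma mx_prod_rank_one (g : nat -> 'rV[R]_N * 'cV[R]_N) n :
  mx_prod [seq (g i).2 *m (g i).1 | i <- iota 0 n.+1] =
  (\prod_(i < n) ((g i).1 *m (g i.+1).2) 0 0) *: ((g 0%N).2 *m (g n).1).
Proof.
elim: n g => [|n IH] g; first by rewrite /= big_ord0 scale1r mulmx1.
have -> : iota 0 n.+2 = 0%N :: [seq i.+1 | i <- iota 0 n.+1].
  by congr cons; exact: (iotaDl 1 0 n.+1).
rewrite map_cons mx_prod_cons -map_comp (IH (fun i => g i.+1)).
rewrite big_ord_recl /= -!scalemxAr mulrC -scalerA; congr (_ *: _).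
rewrite -mulmxA (mulmxA (g 0%N).1) {1}[(g 0%N).1 *m _]mx11_scalar mul_scalar_mx.
by rewrite scalemxAr.
Qed.

Lemma mxtrace_rank_one_cycle n (g : 'I_n.+1 -> 'rV[R]_N * 'cV[R]_N) :
  \tr (mx_prod [seq (g q).2 *m (g q).1 | q <- enum 'I_n.+1]) =
  \prod_(r < n.+1) ((g (prevo r)).1 *m (g r).2) 0 0.
Proof.
pose h i := g (inord i).
have gh q : g q = h q by rewrite /h inord_val.
have -> : [seq (g q).2 *m (g q).1 | q <- enum 'I_n.+1] =
          [seq (h i).2 *m (h i).1 | i <- iota 0 n.+1].
  by rewrite -val_enum_ord -map_comp; apply: eq_map => q /=; rewrite gh.
rewrite mx_prod_rank_one mxtraceZ mxtrace_mulC /mxtrace big_ord1 big_ord_recl mulrC.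
congr (_ * _).
- by rewrite !gh val_prevo add0n modn_small.
- apply: eq_bigr => i _; rewrite !gh val_prevo /= /bump leq0n add1n addSnnS modnDr.
  by rewrite modn_small // ltnS ltnW.
Qed.

Lemma mx_prod_sum_cartprod (T : Type) (x0 : T) n (L : 'I_n -> seq T)
    (F : 'I_n -> T -> 'M[R]_N) :
  \sum_(c <- cartprod [seq L q | q <- enum 'I_n])
     mx_prod [seq F q (nth x0 c q) | q <- enum 'I_n] =
  mx_prod [seq \sum_(x <- L q) F q x | q <- enum 'I_n].
Proof.
elim: n L F => [|n IH] L F.
  by rewrite enum_ord0 /= big_cons big_nil addr0.
have cartprod_cons (l : seq T) ls :
  cartprod (l :: ls) = [seq y :: c | y <- l, c <- cartprod ls] by [].
rewrite enum_ordSl !map_cons mx_prod_cons cartprod_cons big_flatten big_map mulmx_suml.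
apply: eq_bigr => x _.
rewrite -[in RHS]map_comp -(IH (L \o lift ord0) (F \o lift ord0)) mulmx_sumr big_map.
rewrite -map_comp; apply: eq_bigr => c _.
by rewrite map_cons mx_prod_cons -map_comp.
Qed.
End MatrixProducts.

Section PolyvectorEvaluation.
Variables (k : fieldType) (A : algType k) (N : nat) (R : comAlgType k)
  (rho : A -> 'M[R]_N).

Definition pv_app (P : pv A N R) (g : seq (rgen A N)) : R :=
  \sum_(p <- P) p.1 * \prod_(pr <- zip p.2 g) dgen_ev rho pr.1 pr.2.

Lemma pv_evalE m (P : pv A N R) (fs : 'I_m.+1 -> rgen A N) :
  pv_eval rho P fs =
  \sum_(s : 'S_m.+1) (-1) ^+ odd_perm s * pv_app P [seq fs (s q) | q <- enum 'I_m.+1].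
Proof.
rewrite /pv_eval; under eq_bigr do rewrite mulr_sumr.
rewrite exchange_big /=; apply: eq_bigr => s _.
by rewrite /pv_app mulr_sumr; apply: eq_bigr => p _; rewrite mulrCA.
Qed.

Lemma pv_app_flatten (Ps : seq (pv A N R)) g :
  pv_app (flatten Ps) g = \sum_(P <- Ps) pv_app P g.
Proof. exact: big_flatten. Qed.

Lemma pv_app_scale r (P : pv A N R) g : pv_app (pv_scale r P) g = r * pv_app P g.
Proof. by rewrite /pv_app big_map mulr_sumr; apply: eq_bigr => p _; rewrite mulrA. Qed.

Definition dder_mx (d : A -> seq (A * A)) (f : rgen A N) : 'M[R]_N :=
  \matrix_(i, j) dgen_ev rho (d, i, j) f.

Lemma dder_mx_rank_one d b (kk ll : 'I_N) :
  dder_mx d (b, kk, ll) = \sum_(p <- d b) col ll (rho p.2) *m row kk (rho p.1).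
Proof.
apply/matrixP => i j; rewrite !mxE summxE; apply: eq_bigr => p _.
by rewrite !mxE big_ord1 !mxE mulrC.
Qed.

Lemma pv_app_Xword w g : size w = size g -> forall i j,
  pv_app (@Xword k A N R w i j) g = mx_prod [seq dder_mx pr.1 pr.2 | pr <- zip w g] i j.
Proof.
elim: w g => [|d w IH] [|f g] //= size_wg i j.
  by rewrite /pv_app /pv_mx1 mxE; case: eqP => _; rewrite ?big_seq1 ?big_nil /= ?mulr1.
rewrite mxE /pv_app /pv_mxmul big_flatten big_map big_enum /=.
apply: eq_bigr => l _; rewrite -IH; last exact: succn_inj.
rewrite /pv_app /pv_wedge /Xmat /= cats0 big_map mxE mulr_sumr.
by apply: eq_bigr => p _; rewrite /= mul1r big_cons mulrCA.
Qed.

Definition word_trace w g : R := \tr (mx_prod [seq dder_mx pr.1 pr.2 | pr <- zip w g]).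

Lemma pv_app_tr_XQ Q g : (forall q, List.In q Q -> size q.2 = size g) ->
  pv_app (pv_tr (@XQ k A N R Q)) g = \sum_(q <- Q) q.1%:A * word_trace q.2 g.
Proof.
move=> size_Q; rewrite pv_app_flatten big_map big_enum /=.
under eq_bigr do rewrite pv_app_flatten big_map.
rewrite exchange_big; apply: eq_big_In => q Qq.
rewrite /word_trace /mxtrace mulr_sumr; apply: eq_bigr => i _.
by rewrite pv_app_scale pv_app_Xword ?size_Q.
Qed.
End PolyvectorEvaluation.

Section Brackets.
Variables (k : fieldType) (A : algType k) (m : nat).
Local Notation I := 'I_m.+1.

Lemma eq_tbr w (x y : I -> A) : x =1 y -> tbr w x = tbr w y.
Proof.
by move=> eq_xy; rewrite /tbr; congr (map _ (cartprod _)); apply: eq_map => q; rewrite eq_xy.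
Qed.

Lemma rotTinvE (i : I) (x : I -> A) : rotTinv i x =1 (fun j => x (j + i)).
Proof. by move=> j; congr x; apply/val_inj; rewrite /= inordK // ltn_pmod. Qed.

Lemma rotTE (i : I) (y : I -> A) r : rotT i y (r + i) = y r.
Proof.
rewrite /rotT; congr y; apply/val_inj.
rewrite /= inordK ?ltn_pmod // (modn_small (ltn_ord i)) -addnBA ?(ltnW (ltn_ord i)) //.
by rewrite modnDml -addnA subnKC ?(ltnW (ltn_ord i)) // modnDr modn_small.
Qed.
End Brackets.

Section BracketTrace.
Variables (k : fieldType) (A : algType k) (N : nat) (R : comAlgType k)
  (rho : A -> 'M[R]_N).
Hypothesis rhoM : forall a b, rho (a * b) = rho a *m rho b.

Variable m : nat.
Local Notation I := 'I_m.+1.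

Lemma tbr_trace w (b : I -> A) (uu vv : I -> 'I_N) : size w = m.+1 ->
  \sum_(y <- tbr w b) \prod_(r < m.+1) rho (y r) (uu (prevo r)) (vv r) =
  word_trace rho w [seq (b q, uu q, vv q) | q <- enum I].
Proof.
move=> size_w; rewrite /word_trace (zip_enum_ord (fun _ => [::])) // -map_comp.
under eq_map => q do rewrite /= dder_mx_rank_one.
rewrite -(mx_prod_sum_cartprod (0, 0)) raddf_sum /tbr big_map; apply: eq_bigr => c _.
pose g q := (row (uu q) (rho (nth (0, 0) c q).1), col (vv q) (rho (nth (0, 0) c q).2)).
rewrite -[RHS]/(\tr _) (mxtrace_rank_one_cycle g); apply: eq_bigr => r _.
by rewrite rhoM !mxE; apply: eq_bigr => j _; rewrite !mxE.
Qed.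

Lemma tens_eval_bracket Q (x : I -> A) (uu vv : I -> 'I_N) :
  tens_eval rho (bracket Q x) uu vv =
  \sum_(q <- Q) q.1 *: tens_eval rho (bracket_w q.2 x) uu vv.
Proof.
rewrite /tens_eval big_flatten big_map; apply: eq_bigr => q _.
by rewrite big_map scaler_sumr; apply: eq_bigr => t _; rewrite scalerA.
Qed.

Lemma tens_eval_bracket_w w (x : I -> A) (uu vv : I -> 'I_N) :
  tens_eval rho (bracket_w w x) uu vv =
  \sum_(i < m.+1) (-1) ^+ (m * i) *: \sum_(y <- tbr w (fun j => x (j + i)))
     \prod_(r < m.+1) rho (y r) (uu (r + i)) (vv (r + i)).
Proof.
rewrite /tens_eval big_flatten big_map.
have -> : iota 0 m.+1 = index_iota 0 m.+1 by rewrite /index_iota subn0.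
rewrite big_mkord.
apply: eq_bigr => i _; rewrite big_map -scaler_sumr (eq_tbr w (rotTinvE i x)).
congr (_ *: _); apply: eq_bigr => y _.
by rewrite (reindex_inj (addIr i)); apply: eq_bigr => r _; rewrite /= rotTE.
Qed.

Definition XQ_trace Q g : R := \sum_(q <- Q) q.1%:A * word_trace rho q.2 g.

Definition perm_args (a : I -> A) (u v : I -> 'I_N) (s : 'S_m.+1) : seq (rgen A N) :=
  [seq (a (s q), u (s q), v (s q)) | q <- enum I].

Lemma tens_eval_bracket_perm Q (a : I -> A) (u v : I -> 'I_N) (s : 'S_m.+1) :
  (forall q, List.In q Q -> size q.2 = m.+1) ->
  tens_eval rho (bracket Q (fun q => a (s q)))
    (fun q => u (s (prevo q))) (fun q => v (s q)) =
  \sum_(i < m.+1) (-1) ^+ (m * i) * XQ_trace Q (perm_args a u v (rot i * s)).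
Proof.
move=> size_Q; rewrite tens_eval_bracket /XQ_trace.
under [RHS]eq_bigr do rewrite mulr_sumr.
rewrite [RHS]exchange_big /=; apply: eq_big_In => q Qq.
rewrite tens_eval_bracket_w scaler_sumr; apply: eq_bigr => i _.
have -> : perm_args a u v (rot i * s) =
    [seq (a (s (j + i)), u (s (j + i)), v (s (j + i))) | j <- enum I].
  by apply: eq_map => j; rewrite permM rotE.
rewrite -(tbr_trace (fun j => a (s (j + i))) (fun j => u (s (j + i)))
  (fun j => v (s (j + i)))) ?size_Q //.
under eq_bigr do under eq_bigr do rewrite prevoD.
by rewrite scalerA mulrC -scalerA scaler_signE mulr_algl.
Qed.
End BracketTrace.

Theorem lemma5p2 (k : fieldType) (A : algType k) (K : nat) (e : 'I_K -> A)
    (al : 'I_K -> nat) (N : nat) (R : comAlgType k) (rho : A -> 'M[R]_N)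
    (m : nat) (Q : seq (k * seq (A -> seq (A * A))))
    (a : 'I_m.+1 -> A) (u v : 'I_m.+1 -> 'I_N) :
  [pchar k] =i pred0 ->
  @is_B_alg k A K e -> @fin_gen k A K e ->
  N = (\sum_(s < K) al s)%N ->
  @is_coord_ring k A K e al N R rho ->
  (forall q, List.In q Q ->
     size q.2 = m.+1 /\ forall d, List.In d q.2 -> @is_dder k A K e d) ->
  @pv_eval k A N R rho m (pv_tr (@XQ k A N R Q)) (fun q => (a q, u q, v q)) =
  \sum_(s : 'S_m.+1 | s ord0 == ord0)
     (-1) ^+ odd_perm s *
     @tens_eval k A N R rho m (@bracket k A m Q (fun q => a (s q)))
       (fun q => u (s (prevo q))) (fun q => v (s q)).
Proof.
move=> _ _ _ _ [[_ rhoM _ _] _] dder_Q.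
have size_Q q : List.In q Q -> size q.2 = m.+1 by case/dder_Q.
have size_args s q : List.In q Q -> size q.2 = size (perm_args a u v s).
  by move/size_Q ->; rewrite size_map size_enum_ord.
rewrite pv_evalE.
under eq_bigr => s _ do rewrite (pv_app_tr_XQ rho (size_args s)) -/(XQ_trace rho Q _).
rewrite sum_perm_rot; apply: eq_bigr => s _.
by rewrite tens_eval_bracket_perm.
Qed.
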